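(* Let $|\psi\rangle,|\phi\rangle,|e\rangle,|f\rangle$ be unit vectors in $\mathbb{C}^2$ with $\langle e|f\rangle=0$. Then for every $\mathcal{X}\in\{\mathcal{R},\mathcal{UE},\mathcal{GE},\mathcal{C}\}$, $$\max_{\Psi\in\mathcal{X}}\left\{\frac12\langle e|\Psi(|\psi\rangle\langle\psi|)|e\rangle+\frac12\langle f|\Psi(|\phi\rangle\langle\phi|)|f\rangle\right\}=\frac12\left(1+\sqrt{1-|\langle\psi|\phi\rangle|^2}\right).$$
   Context: Channels are linear, completely positive, trace preserving maps on $\mathcal{L}(\mathbb{C}^2)$. $\mathcal{C}$ is the set of all quantum channels; $\mathcal{R}$ is the set of random unitary channels $A\mapsto\sum_xp_xU_xAU_x^\dagger$ ($\{p_x\}$ a finite probability distribution, $U_x$ unitary); $\mathcal{GE}$ is the set of entanglement breaking channels (those $\Psi$ with $(\mathrm{id}\otimes\Psi)(\rho)$ separable for every state $\rho$ on $\mathbb{C}^2\otimes\mathbb{C}^2$); $\mathcal{UE}$ is the set of unital ($\Psi(I)=I$) entanglement breaking channels. *)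

From HB Require Import structures.
From mathcomp Require Import all_boot all_order all_algebra.
From mathcomp Require Import complex.
From mathcomp Require Import reals.
Set Implicit Arguments. Unset Strict Implicit. Unset Printing Implicit Defensive.
Import Order.TTheory GRing.Theory Num.Theory.
Local Open Scope ring_scope.

Section QubitChannels.
Variable R : realType.
Local Notation C := R[i].
Local Notation M2 := 'M[C]_2.

Definition adj m n (A : 'M[C]_(m, n)) : 'M[C]_(n, m) := (map_mx Num.conj A)^T.

Definition inner (x y : 'cV[C]_2) : C := (adj x *m y) 0 0.

Definition ketbra (x : 'cV[C]_2) : M2 := x *m adj x.

Definition unit_vector (x : 'cV[C]_2) : Prop := inner x x = 1.

(* positive semidefinite 2x2 matrix (0 <= z in C means z real and >= 0) *)
Definition psd (A : M2) : Prop := forall v : 'cV[C]_2, 0 <= inner v (A *m v).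

Definition is_state (A : M2) : Prop := psd A /\ \tr A = 1.

(* An operator X on C^n (x) C^2 is represented by its n x n array of 2x2 blocks
   X i j; it is positive semidefinite iff sum_{i,j} <v_i| X_ij |v_j> >= 0
   for all vectors v = (v_i)_i in C^n (x) C^2. *)
Definition block_psd (n : nat) (B : 'I_n -> 'I_n -> M2) : Prop :=
  forall v : 'I_n -> 'cV[C]_2, 0 <= \sum_(i < n) \sum_(j < n) inner (v i) (B i j *m v j).

(* id_n (x) Psi, acting blockwise *)
Definition ampl (n : nat) (Psi : M2 -> M2) (B : 'I_n -> 'I_n -> M2) :=
  fun i j => Psi (B i j).

Definition is_linear_map (Psi : M2 -> M2) : Prop :=
  forall (a : C) (X Y : M2), Psi (a *: X + Y) = a *: Psi X + Psi Y.

Definition completely_positive (Psi : M2 -> M2) : Prop :=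
  forall (n : nat) (B : 'I_n -> 'I_n -> M2), block_psd B -> block_psd (ampl Psi B).

Definition trace_preserving (Psi : M2 -> M2) : Prop := forall X, \tr (Psi X) = \tr X.

Definition is_channel (Psi : M2 -> M2) : Prop :=
  [/\ is_linear_map Psi, completely_positive Psi & trace_preserving Psi].

Definition unitary (U : M2) : Prop := U *m adj U = 1%:M.

Definition is_random_unitary (Psi : M2 -> M2) : Prop :=
  exists (K : nat) (p : 'I_K -> C) (U : 'I_K -> M2),
    [/\ forall k, 0 <= p k, \sum_(k < K) p k = 1, forall k, unitary (U k)
      & forall A, Psi A = \sum_(k < K) p k *: (U k *m A *m adj (U k))].

Definition is_state2 (B : 'I_2 -> 'I_2 -> M2) : Prop :=
  block_psd B /\ \sum_(i < 2) \tr (B i i) = 1.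

(* separable: a finite convex combination of product states sigma (x) tau,
   whose (i,j) block is sigma i j *: tau *)
Definition separable2 (B : 'I_2 -> 'I_2 -> M2) : Prop :=
  exists (K : nat) (p : 'I_K -> C) (s t : 'I_K -> M2),
    [/\ forall k, 0 <= p k, \sum_(k < K) p k = 1,
        forall k, is_state (s k), forall k, is_state (t k)
      & forall i j, B i j = \sum_(k < K) (p k * s k i j) *: t k].

Definition is_entanglement_breaking (Psi : M2 -> M2) : Prop :=
  is_channel Psi /\ forall B, is_state2 B -> separable2 (ampl Psi B).

Definition is_unital (Psi : M2 -> M2) : Prop := Psi 1%:M = 1%:M.

Definition is_unital_entanglement_breaking (Psi : M2 -> M2) : Prop :=
  is_entanglement_breaking Psi /\ is_unital Psi.

Definition success (psi phi e f : 'cV[C]_2) (Psi : M2 -> M2) : C :=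
  2^-1 * inner e (Psi (ketbra psi) *m e) + 2^-1 * inner f (Psi (ketbra phi) *m f).

End QubitChannels.

(* Write D = |psi><psi| - |phi><phi| and s = sqrt (1 - |<psi|phi>|^2).  D is traceless
   with D^2 = s^2, so D = s (|x><x| - |y><y|) for an orthonormal basis {x, y} of C^2.
   Since {e, f} is a basis and a channel Psi preserves traces, the objective equals
   (1 + <e|Psi(D)|e>) / 2, and positivity of Psi gives
   <e|Psi(|x><x| - |y><y|)|e> <= <e|Psi(|x><x|)|e> <= 1.  This bounds the objective by
   (1 + s) / 2 on every channel, and random unitary channels are channels.  The bound is
   attained by the measure-and-prepare channel A |-> <x|A|x> |e><e| + <y|A|y> |f><f|:
   it is the uniform mixture of the conjugations by |e><x| + |f><y| and |e><x| - |f><y|,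
   it is unital, and it is entanglement breaking. *)

From HB Require Import structures.
From mathcomp Require Import all_boot all_order all_algebra.
From mathcomp Require Import complex reals ring.
Set Implicit Arguments. Unset Strict Implicit. Unset Printing Implicit Defensive.
Import Order.TTheory GRing.Theory Num.Theory.
Local Open Scope ring_scope.

Section QubitChannels.
Variable R : realType.
Local Notation C := R[i].
Local Notation M2 := 'M[C]_2.
Local Notation vec := 'cV[C]_2.
Implicit Types (x y z w psi phi e f : vec) (A S : M2) (Psi : M2 -> M2).

Lemma big_ord2 (V : nmodType) (F : 'I_2 -> V) : \sum_(k < 2) F k = F 0 + F 1.
Proof. by rewrite big_ord_recl big_ord1; congr (_ + F _); apply: val_inj. Qed.

Lemma adjmxE m n (M : 'M[C]_(m, n)) i j : adj M i j = (M j i)^*.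
Proof. by rewrite !mxE. Qed.

Lemma adjmxK m n (M : 'M[C]_(m, n)) : adj (adj M) = M.
Proof. by apply/matrixP=> i j; rewrite !adjmxE conjCK. Qed.

Lemma adjmxD m n (M N : 'M[C]_(m, n)) : adj (M + N) = adj M + adj N.
Proof. by apply/matrixP=> i j; rewrite !adjmxE !mxE rmorphD. Qed.

Lemma adjmxB m n (M N : 'M[C]_(m, n)) : adj (M - N) = adj M - adj N.
Proof. by apply/matrixP=> i j; rewrite !adjmxE !mxE rmorphB. Qed.

Lemma adjmxZ m n a (M : 'M[C]_(m, n)) : adj (a *: M) = a^* *: adj M.
Proof. by apply/matrixP=> i j; rewrite !adjmxE !mxE rmorphM. Qed.

Lemma adjmxM m n p (M : 'M[C]_(m, n)) (N : 'M[C]_(n, p)) : adj (M *m N) = adj N *m adj M.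
Proof. by rewrite /adj map_mxM trmx_mul. Qed.

Lemma innerE x y : inner x y = \sum_(k < 2) (x k 0)^* * y k 0.
Proof. by rewrite /inner mxE; apply: eq_bigr => k _; rewrite adjmxE. Qed.

Lemma conj_inner x y : (inner x y)^* = inner y x.
Proof.
by rewrite !innerE rmorph_sum; apply: eq_bigr => k _; rewrite rmorphM /= conjCK mulrC.
Qed.

Lemma innerDr x y z : inner x (y + z) = inner x y + inner x z.
Proof. by rewrite /inner mulmxDr mxE. Qed.

Lemma innerZr a x y : inner x (a *: y) = a * inner x y.
Proof. by rewrite /inner -scalemxAr mxE. Qed.

Lemma innerBr x y z : inner x (y - z) = inner x y - inner x z.
Proof. by rewrite -scaleN1r innerDr innerZr mulN1r. Qed.

Lemma innerDl x y z : inner (x + y) z = inner x z + inner y z.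
Proof. by rewrite /inner adjmxD mulmxDl mxE. Qed.

Lemma innerZl a x y : inner (a *: x) y = a^* * inner x y.
Proof. by rewrite /inner adjmxZ -scalemxAl mxE. Qed.

Lemma innerBl x y z : inner (x - y) z = inner x z - inner y z.
Proof. by rewrite -scaleN1r innerDl innerZl rmorphN1 mulN1r. Qed.

Lemma inner_sumr x I (r : seq I) (P : pred I) (F : I -> vec) :
  inner x (\sum_(k <- r | P k) F k) = \sum_(k <- r | P k) inner x (F k).
Proof. by rewrite /inner mulmx_sumr summxE. Qed.

Lemma inner_adjmx A x y : inner x (A *m y) = inner (adj A *m x) y.
Proof. by rewrite /inner adjmxM adjmxK mulmxA. Qed.

Lemma inner_ge0 x : 0 <= inner x x.
Proof. by rewrite innerE; apply: sumr_ge0 => k _; rewrite mulrC mul_conjC_ge0. Qed.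

Lemma inner_eq0 x : inner x x = 0 -> x = 0.
Proof.
rewrite innerE big_ord2 => /eqP.
rewrite paddr_eq0 ?[_ * x _ _]mulrC ?mul_conjC_ge0 // !mul_conjC_eq0 => /andP[/eqP x0 /eqP x1].
by rewrite [x]matrix_sum_delta big_ord2 !big_ord1 x0 x1 !scale0r addr0.
Qed.

Lemma adjmx_mul_inner x y : adj x *m y = (inner x y)%:M.
Proof. exact: mx11_scalar. Qed.

Lemma ketbra_mulmx x y : ketbra x *m y = inner x y *: x.
Proof. by rewrite /ketbra -mulmxA adjmx_mul_inner mul_mx_scalar. Qed.

Lemma inner_ketbra z x y : inner z (ketbra x *m y) = inner z x * inner x y.
Proof. by rewrite ketbra_mulmx innerZr mulrC. Qed.

Lemma ketbraZ a x : ketbra (a *: x) = `|a| ^+ 2 *: ketbra x.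
Proof. by rewrite /ketbra adjmxZ -scalemxAl -scalemxAr scalerA normCK. Qed.

Lemma mxtrace_outer x y : \tr (x *m adj y) = inner y x.
Proof. by rewrite mxtrace_mulC adjmx_mul_inner mxtrace_scalar. Qed.

Lemma mulmx_outer x y z w : x *m adj y *m (z *m adj w) = inner y z *: (x *m adj w).
Proof. by rewrite mulmxA -[x *m _ *m z]mulmxA adjmx_mul_inner mul_mx_scalar scalemxAl. Qed.

Lemma mulmx_outer_mx x y z w A :
  x *m adj y *m A *m (z *m adj w) = inner y (A *m z) *: (x *m adj w).
Proof. by rewrite -mulmxA (mulmxA A) mulmx_outer. Qed.

Lemma inner_delta_mx i j A : inner (delta_mx i 0) (A *m delta_mx j 0) = A i j.
Proof.
rewrite /inner; have -> : adj (delta_mx i 0 : vec) = delta_mx 0 i.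
  by apply/matrixP=> k l; rewrite !mxE conjC_nat andbC.
by rewrite -colE -rowE !mxE.
Qed.

Lemma ketbra_psd x : psd (ketbra x).
Proof. by move=> v; rewrite inner_ketbra -conj_inner mulrC mul_conjC_ge0. Qed.

Lemma ketbra_state x : unit_vector x -> is_state (ketbra x).
Proof. by move=> ux; split; [exact: ketbra_psd | rewrite mxtrace_outer]. Qed.

Definition orthonormal2 x y := [/\ unit_vector x, unit_vector y & inner x y = 0].

Lemma orthonormal2_innerC x y : orthonormal2 x y -> inner y x = 0.
Proof. by case=> _ _ xy; rewrite -conj_inner xy conjC0. Qed.

Lemma orthonormal2_delta : orthonormal2 (delta_mx 0 0) (delta_mx 1 0).
Proof. by split; rewrite /unit_vector -[X in inner _ X]mul1mx inner_delta_mx mxE. Qed.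

Lemma orthonormal2_ketbraD x y : orthonormal2 x y -> ketbra x + ketbra y = 1%:M.
Proof.
case=> ux uy xy; pose U : 'M[C]_(2, 1 + 1) := row_mx x y.
have adjU : adj U = col_mx (adj x) (adj y) by rewrite /adj map_row_mx tr_row_mx.
have U_isometry : adj U *m U = 1%:M.
  rewrite adjU mul_col_row !adjmx_mul_inner ux uy xy -conj_inner xy conjC0.
  by rewrite scalar_mx_block raddf0.
by rewrite -(mulmx1C U_isometry) adjU mul_row_col.
Qed.

Lemma orthonormal2_mxtrace x y A : orthonormal2 x y ->
  \tr A = inner x (A *m x) + inner y (A *m y).
Proof.
move=> /orthonormal2_ketbraD xy1.
by rewrite -{1}[A]mulmx1 -xy1 mulmxDr mxtraceD /ketbra !mulmxA !mxtrace_outer.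
Qed.

Lemma conj_form_ge0_eq0 (u w : C) : (forall t, 0 <= u * t + t^* * w) -> u = 0 /\ w = 0.
Proof.
move=> form_ge0.
have form0 t : u * t + t^* * w = 0.
  apply: le_anti; rewrite form_ge0 andbT -oppr_ge0.
  by have := form_ge0 (- t); rewrite rmorphN mulrN mulNr -opprD.
have := form0 1; have := form0 'i; rewrite conjC1 conjCi mulr1 mul1r => formi form1.
have : 2 * u = (u + w) + (u * 'i + - 'i * w) * - 'i by ring: (sqrCi C).
rewrite form1 formi mul0r addr0 => /eqP; rewrite mulf_eq0 pnatr_eq0 /= => /eqP u0.
by split=> //; move: form1; rewrite u0 add0r.
Qed.

Lemma psd_mxtrace0 S : psd S -> \tr S = 0 -> S = 0.
Proof.
move=> S_psd; have Sii i : 0 <= S i i by rewrite -inner_delta_mx S_psd.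
rewrite /mxtrace big_ord2 => /eqP; rewrite paddr_eq0 // => /andP[/eqP S00 /eqP S11].
have [S01 S10] : S 0 1 = 0 /\ S 1 0 = 0.
  apply: conj_form_ge0_eq0 => t; have := S_psd (delta_mx 0 0 + t *: delta_mx 1 0).
  rewrite mulmxDr -scalemxAr innerDl !innerDr !innerZl !innerZr !inner_delta_mx S00 S11.
  by rewrite !mulr0 !addr0 add0r mulrC.
by rewrite [S]matrix_sum_delta !big_ord2 S00 S01 S10 S11 !scale0r !addr0.
Qed.

Lemma psd_scaled_state S : psd S -> exists p sigma, [/\ 0 <= p, is_state sigma & S = p *: sigma].
Proof.
move=> S_psd; have trS_ge0 : 0 <= \tr S.
  by rewrite (orthonormal2_mxtrace _ orthonormal2_delta) addr_ge0.
have [trS0|trS_neq0] := eqVneq (\tr S) 0.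
  exists 0, (ketbra (delta_mx 0 0)); split=> //.
    by apply: ketbra_state; case: orthonormal2_delta.
  by rewrite scale0r (psd_mxtrace0 S_psd trS0).
exists (\tr S), ((\tr S)^-1 *: S); split=> //.
- split; last by rewrite mxtraceZ mulVf.
  by move=> v; rewrite -scalemxAl innerZr mulr_ge0 ?invr_ge0.
- by rewrite scalerA mulfV ?scale1r.
Qed.

(* The 2 x 2 matrix <z| B_ij |z> is B compressed to z on the second tensor factor. *)
Lemma block_psd_compress (B : 'I_2 -> 'I_2 -> M2) z :
  block_psd B -> psd (\matrix_(i, j) inner z (B i j *m z)).
Proof.
move=> B_psd w.
suff -> : inner w ((\matrix_(i, j) inner z (B i j *m z)) *m w) =
    \sum_i \sum_j inner (w i 0 *: z) (B i j *m (w j 0 *: z)) by apply: B_psd.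
rewrite innerE; apply: eq_bigr => i _; rewrite mxE mulr_sumr; apply: eq_bigr => j _.
by rewrite mxE -scalemxAr innerZl innerZr; congr (_ * _); apply: mulrC.
Qed.

Lemma orthonormal2_eigen x y A a b : orthonormal2 x y ->
  A *m x = a *: x -> A *m y = b *: y -> A = a *: ketbra x + b *: ketbra y.
Proof.
move=> /orthonormal2_ketbraD xy1 Ax Ay.
by rewrite -[A]mulmx1 -xy1 mulmxDr /ketbra !mulmxA Ax Ay -!scalemxAl.
Qed.

Lemma unit_vector_normalize x :
  inner x x != 0 -> unit_vector ((sqrtc (inner x x))^-1 *: x).
Proof.
move=> nx0; set k := (sqrtc _)^-1.
have k_ge0 : 0 <= k by rewrite invr_ge0 sqrtc_ge0 inner_ge0.
rewrite /unit_vector innerZl innerZr geC0_conj // mulrA -expr2 exprVn sqr_sqrtc.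
by rewrite mulVf.
Qed.

Lemma orthogonal_eigen_decomposition A a b (s t : C) :
  inner a a != 0 -> inner b b != 0 -> inner a b = 0 -> A *m a = s *: a -> A *m b = t *: b ->
  exists x y, orthonormal2 x y /\ A = s *: ketbra x + t *: ketbra y.
Proof.
move=> a0 b0 ab Aa Ab.
have eigen_scale z r k : A *m z = r *: z -> A *m (k *: z) = r *: (k *: z).
  by move=> Az; rewrite -scalemxAr Az !scalerA mulrC.
exists ((sqrtc (inner a a))^-1 *: a), ((sqrtc (inner b b))^-1 *: b).
have xy : orthonormal2 ((sqrtc (inner a a))^-1 *: a) ((sqrtc (inner b b))^-1 *: b).
  by split; [exact: unit_vector_normalize.. | rewrite innerZl innerZr ab !mulr0].
by split; [exact: xy | apply: orthonormal2_eigen xy _ _; apply: eigen_scale].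
Qed.

Lemma inner_sub_proj psi phi : unit_vector psi -> unit_vector phi ->
  inner (phi - inner psi phi *: psi) (phi - inner psi phi *: psi) = 1 - `|inner psi phi| ^+ 2.
Proof.
move=> upsi uphi; rewrite normCK innerBl !innerBr !innerZl !innerZr upsi uphi.
by rewrite -(conj_inner psi phi); ring.
Qed.

Lemma sqrt_one_sub_inner_ge0 psi phi : unit_vector psi -> unit_vector phi ->
  0 <= sqrtc (1 - `|inner psi phi| ^+ 2).
Proof. by move=> upsi uphi; rewrite sqrtc_ge0 -inner_sub_proj ?inner_ge0. Qed.

Lemma ketbraB_eigenvectors psi phi (s : C) : unit_vector psi -> unit_vector phi ->
  s^* = s -> s ^+ 2 = 1 - `|inner psi phi| ^+ 2 ->
  exists a b, [/\ (ketbra psi - ketbra phi) *m a = s *: a,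
    (ketbra psi - ketbra phi) *m b = - s *: b, inner a a = 2 * s ^+ 2 * (1 + s),
    inner b b = 2 * s ^+ 2 * (1 + s) & inner a b = 0].
Proof.
move=> upsi uphi sJ s2; set c := inner psi phi.
exists ((1 + s) *: psi - c^* *: phi), (c *: psi - (1 + s) *: phi).
have cc : c * c^* = 1 - s ^+ 2 by rewrite s2 normCK subKr.
have psiphi : inner psi phi = c by [].
have phipsi : inner phi psi = c^* by rewrite conj_inner.
have s1J : (1 + s)^* = 1 + s by rewrite rmorphD rmorph1 /= sJ.
clearbody c; split.
- rewrite mulmxBl !ketbra_mulmx !innerBr !innerZr upsi uphi psiphi phipsi scalerBr !scalerA.
  by congr (_ *: _ - _ *: _); ring: cc.
- rewrite mulmxBl !ketbra_mulmx !innerBr !innerZr upsi uphi psiphi phipsi scalerBr !scalerA.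
  by congr (_ *: _ - _ *: _); ring: cc.
- by rewrite innerBl !innerBr !innerZl !innerZr upsi uphi psiphi phipsi s1J conjCK; ring: cc.
- by rewrite innerBl !innerBr !innerZl !innerZr upsi uphi psiphi phipsi s1J; ring: cc.
- by rewrite innerBl !innerBr !innerZl !innerZr upsi uphi psiphi phipsi s1J conjCK; ring: cc.
Qed.

Lemma ketbraB_spectral psi phi : unit_vector psi -> unit_vector phi ->
  exists x y, orthonormal2 x y /\
    ketbra psi - ketbra phi = sqrtc (1 - `|inner psi phi| ^+ 2) *: (ketbra x - ketbra y).
Proof.
move=> upsi uphi; have s_ge0 := sqrt_one_sub_inner_ge0 upsi uphi.
set s := sqrtc _ in s_ge0 *.
have [s0|s_neq0] := eqVneq s 0.
  have c_norm1 : `|inner psi phi| ^+ 2 = 1.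
    by apply/esym/eqP; rewrite -subr_eq0 -sqrtc_eq0 -/s s0.
  have phiE : phi = inner psi phi *: psi.
    apply/eqP; rewrite -subr_eq0; apply/eqP/inner_eq0.
    by rewrite inner_sub_proj // c_norm1 subrr.
  exists (delta_mx 0 0), (delta_mx 1 0); split; first exact: orthonormal2_delta.
  by rewrite s0 scale0r phiE ketbraZ c_norm1 scale1r subrr.
have s_gt0 : 0 < s by rewrite lt_def s_neq0.
have norm_neq0 : 2 * s ^+ 2 * (1 + s) != 0.
  by rewrite gt_eqF // !mulr_gt0 ?exprn_gt0 ?ltr0n ?ltr_pwDl.
have [a [b [Da Db aa bb ab]]] :=
  ketbraB_eigenvectors upsi uphi (geC0_conj s_ge0) (sqr_sqrtc _).
have [x [y [xy ->]]] : exists x y, orthonormal2 x y /\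
    ketbra psi - ketbra phi = s *: ketbra x + - s *: ketbra y.
  by apply: (orthogonal_eigen_decomposition _ _ ab Da Db); rewrite ?aa ?bb.
by exists x, y; rewrite scaleNr scalerBr.
Qed.

Lemma linear_map0 Psi : is_linear_map Psi -> Psi 0 = 0.
Proof.
move=> lin; have := lin 1 0 0; rewrite !scale1r addr0 => Psi00.
by apply/esym/(addrI (Psi 0)); rewrite addr0 -Psi00.
Qed.

Lemma linear_mapZ Psi a A : is_linear_map Psi -> Psi (a *: A) = a *: Psi A.
Proof. by move=> lin; have := lin a A 0; rewrite (linear_map0 lin) !addr0. Qed.

Lemma linear_mapB Psi A A' : is_linear_map Psi -> Psi (A - A') = Psi A - Psi A'.
Proof. by move=> lin; rewrite addrC -scaleN1r lin scaleN1r addrC. Qed.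

Lemma completely_positive_psd Psi A : completely_positive Psi -> psd A -> psd (Psi A).
Proof.
move=> cp A_psd w; have := cp 1 (fun _ _ => A) _ (fun _ => w); rewrite /ampl !big_ord1.
by apply=> v; rewrite !big_ord1.
Qed.

Lemma trace_preserving_ketbra Psi z e f : trace_preserving Psi -> unit_vector z ->
  orthonormal2 e f -> inner f (Psi (ketbra z) *m f) = 1 - inner e (Psi (ketbra z) *m e).
Proof.
move=> tp uz ef; apply/esym/eqP.
by rewrite subr_eq addrC -(orthonormal2_mxtrace _ ef) tp mxtrace_outer uz.
Qed.

Lemma random_unitary_channel Psi : is_random_unitary Psi -> is_channel Psi.
Proof.
case=> K [p [U [p_ge0 p_sum1 U_unitary PsiE]]]; split.
- move=> a A A'; rewrite !PsiE scaler_sumr -big_split; apply: eq_bigr => k _ /=.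
  by rewrite mulmxDr mulmxDl -scalemxAr -scalemxAl scalerDr !scalerA mulrC.
- move=> n B B_psd v; rewrite /ampl.
  have termE i j : inner (v i) (Psi (B i j) *m v j) =
      \sum_(k < K) p k * inner (adj (U k) *m v i) (B i j *m (adj (U k) *m v j)).
    rewrite PsiE mulmx_suml inner_sumr; apply: eq_bigr => k _.
    by rewrite -scalemxAl innerZr -!mulmxA inner_adjmx.
  under eq_bigr => i _ do under eq_bigr => j _ do rewrite termE.
  under eq_bigr => i _ do rewrite exchange_big.
  rewrite exchange_big; apply: sumr_ge0 => k _.
  under eq_bigr => i _ do rewrite -mulr_sumr.
  by rewrite -mulr_sumr mulr_ge0 //; apply: B_psd.
- move=> A; rewrite PsiE raddf_sum (eq_bigr (fun k => p k * \tr A)) => [|k _].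
    by rewrite -mulr_suml p_sum1 mul1r.
  by rewrite /= mxtraceZ mxtrace_mulC mulmxA (mulmx1C (U_unitary k)) mul1mx.
Qed.

Lemma success_tpE psi phi e f Psi : is_linear_map Psi -> trace_preserving Psi ->
  unit_vector phi -> orthonormal2 e f ->
  success psi phi e f Psi = 2^-1 * (1 + inner e (Psi (ketbra psi - ketbra phi) *m e)).
Proof.
move=> lin tp uphi ef; rewrite /success (trace_preserving_ketbra tp uphi ef).
by rewrite (linear_mapB _ _ lin) mulmxBl innerBr -mulrDr addrCA.
Qed.

Lemma channel_ketbraB_le Psi x y e f : is_channel Psi -> unit_vector x -> orthonormal2 e f ->
  inner e (Psi (ketbra x - ketbra y) *m e) <= 1.
Proof.
case=> lin cp tp ux ef.
have Psi_ge0 z v : 0 <= inner v (Psi (ketbra z) *m v).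
  exact: completely_positive_psd cp (ketbra_psd z) v.
have := Psi_ge0 x f; rewrite (trace_preserving_ketbra tp ux ef) subr_ge0 => Ex_le1.
by rewrite (linear_mapB _ _ lin) mulmxBl innerBr (le_trans _ Ex_le1) // gerBl Psi_ge0.
Qed.

Lemma success_le_channel psi phi e f Psi : is_channel Psi ->
  unit_vector psi -> unit_vector phi -> orthonormal2 e f ->
  success psi phi e f Psi <= 2^-1 * (1 + sqrtc (1 - `|inner psi phi| ^+ 2)).
Proof.
move=> chPsi upsi uphi ef; have [lin _ tp] := chPsi.
have [x [y [[ux _ _] D_spec]]] := ketbraB_spectral upsi uphi.
rewrite success_tpE // D_spec (linear_mapZ _ _ lin) -scalemxAl innerZr.
rewrite ler_wpM2l ?invr_ge0 ?ler0n // lerD2l ler_piMr ?sqrt_one_sub_inner_ge0 //.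
exact: (channel_ketbraB_le _ chPsi ux ef).
Qed.

Lemma mulmx_sign_avg n (E F G H A : 'M[C]_n) :
  2^-1 *: ((E + F) *m A *m (G + H)) + 2^-1 *: ((E - F) *m A *m (G - H)) =
  E *m A *m G + F *m A *m H.
Proof.
rewrite mulmxDr mulmxBr !mulmxDl !mulNmx.
move: (E *m A *m G) (E *m A *m H) (F *m A *m G) (F *m A *m H) => EG EH FG FH.
by apply/matrixP=> i j; rewrite !mxE; field.
Qed.

Definition measure_prepare x y e f A : M2 :=
  inner x (A *m x) *: ketbra e + inner y (A *m y) *: ketbra f.

Lemma measure_prepare_random_unitary x y e f : orthonormal2 x y -> orthonormal2 e f ->
  is_random_unitary (measure_prepare x y e f).
Proof.
move=> xy ef; have [ux uy x_y] := xy; have y_x := orthonormal2_innerC xy.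
pose U (k : 'I_2) : M2 := e *m adj x + (-1) ^+ k *: (f *m adj y).
have adjU k : adj (U k) = x *m adj e + (-1) ^+ k *: (y *m adj f).
  by rewrite adjmxD adjmxZ !adjmxM !adjmxK rmorphXn rmorphN1.
exists 2, (fun _ => 2^-1), U; split.
- by move=> _; rewrite invr_ge0 ler0n.
- by rewrite big_ord2; field.
- move=> k; rewrite /unitary adjU /U mulmxDl !mulmxDr -!scalemxAl -!scalemxAr !mulmx_outer.
  rewrite ux uy x_y y_x !scale0r !scaler0 addr0 add0r !scale1r signrZK.
  exact: orthonormal2_ketbraD.
move=> A; rewrite big_ord2 /U expr0 expr1 !scale1r !scaleN1r adjmxD adjmxB !adjmxM !adjmxK.
by rewrite mulmx_sign_avg !mulmx_outer_mx.
Qed.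

Lemma measure_prepare_channel x y e f : orthonormal2 x y -> orthonormal2 e f ->
  is_channel (measure_prepare x y e f).
Proof. by move=> xy ef; apply/random_unitary_channel/measure_prepare_random_unitary. Qed.

Lemma measure_prepare_unital x y e f : unit_vector x -> unit_vector y -> orthonormal2 e f ->
  is_unital (measure_prepare x y e f).
Proof.
move=> ux uy ef.
by rewrite /is_unital /measure_prepare !mul1mx ux uy !scale1r orthonormal2_ketbraD.
Qed.

Lemma inner_lincomb_mulmx u w a b (M N : M2) :
  inner u ((a *: M + b *: N) *m w) = a * inner u (M *m w) + b * inner u (N *m w).
Proof. by rewrite mulmxDl -!scalemxAl innerDr !innerZr. Qed.

Lemma inner_measure_prepare x y e f A : orthonormal2 e f ->
  inner e (measure_prepare x y e f A *m e) = inner x (A *m x).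
Proof.
move=> ef; have [ue _ e_f] := ef.
rewrite inner_lincomb_mulmx !inner_ketbra ue e_f.
by rewrite mul1r mulr1 mul0r mulr0 addr0.
Qed.

Lemma success_measure_prepare psi phi x y e f (s : C) :
  unit_vector phi -> orthonormal2 x y -> orthonormal2 e f ->
  ketbra psi - ketbra phi = s *: (ketbra x - ketbra y) ->
  success psi phi e f (measure_prepare x y e f) = 2^-1 * (1 + s).
Proof.
move=> uphi xy ef D_spec; have [lin _ tp] := measure_prepare_channel xy ef.
have [ux _ x_y] := xy.
rewrite success_tpE // inner_measure_prepare // D_spec -scalemxAl innerZr mulmxBl innerBr.
by rewrite !inner_ketbra ux x_y mulr1 mul0r subr0 mulr1.
Qed.

Lemma measure_prepare_entanglement_breaking x y e f : orthonormal2 x y -> orthonormal2 e f ->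
  is_entanglement_breaking (measure_prepare x y e f).
Proof.
move=> xy ef; split; first exact: measure_prepare_channel.
move=> B [B_psd trB1]; have [ue uf _] := ef.
have [px [sx [px_ge0 sx_state Bx]]] := psd_scaled_state (block_psd_compress x B_psd).
have [py [sy [py_ge0 sy_state By]]] := psd_scaled_state (block_psd_compress y B_psd).
exists 2, (fun k => if k == 0 then px else py), (fun k => if k == 0 then sx else sy),
  (fun k => if k == 0 then ketbra e else ketbra f); split.
- by move=> k; case: ifP.
- have tr_state (p : C) sigma : is_state sigma -> \tr (p *: sigma) = p.
    by case=> _ tr1; rewrite mxtraceZ tr1 mulr1.
  rewrite big_ord2 /= -[px](tr_state _ _ sx_state) -[py](tr_state _ _ sy_state) -Bx -By -trB1.
  have tr_compress z : \tr (\matrix_(i, j) inner z (B i j *m z)) = \sum_i inner z (B i i *m z).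
    by apply: eq_bigr => i _; rewrite mxE.
  rewrite !tr_compress -big_split; apply: eq_bigr => i _.
  by rewrite (orthonormal2_mxtrace _ xy).
- by move=> k; case: ifP.
- by move=> k; case: ifP => _; apply: ketbra_state.
move=> i j; rewrite big_ord2 /= /ampl /measure_prepare.
have entry (M : M2) (p : C) sigma : M = p *: sigma -> p * sigma i j = M i j.
  by move=> ->; rewrite mxE.
by rewrite (entry _ _ _ Bx) (entry _ _ _ By) !mxE.
Qed.

End QubitChannels.

Theorem proposition10 (R : realType) (psi phi e f : 'cV[R[i]]_2)
  (hpsi : unit_vector psi) (hphi : unit_vector phi)
  (he : unit_vector e) (hf : unit_vector f) (hef : inner e f = 0)
  (X : ('M[R[i]]_2 -> 'M[R[i]]_2) -> Prop)
  (hX : X = @is_random_unitary R \/ X = @is_unital_entanglement_breaking R \/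
        X = @is_entanglement_breaking R \/ X = @is_channel R) :
  let v := 2^-1 * (1 + sqrtc (1 - `|inner psi phi| ^+ 2)) in
  (exists Psi, X Psi /\ success psi phi e f Psi = v) /\
  (forall Psi, X Psi -> success psi phi e f Psi <= v).
Proof.
move=> v; have ef : orthonormal2 e f by split.
have [x [y [xy D_spec]]] := ketbraB_spectral hpsi hphi.
have X_channel Psi : X Psi -> is_channel Psi.
  by case: hX => [|[|[|]]] -> //; [exact: random_unitary_channel | case=> [[]] | case].
split; last by move=> Psi /X_channel chPsi; apply: success_le_channel.
exists (measure_prepare x y e f); split; last exact: success_measure_prepare D_spec.
case: hX => [|[|[|]]] ->.
- exact: measure_prepare_random_unitary.
- by split; [exact: measure_prepare_entanglement_breaking | case: xy => ux uy _;
    exact: measure_prepare_unital].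
- exact: measure_prepare_entanglement_breaking.
- exact: measure_prepare_channel.
Qed.
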